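(* Let $w\in G(m,p,n)$ be arbitrary and $u\in[\mathrm{id},w]_{\mathrm{cdf}}$. Then (1) $\operatorname{codim}\operatorname{fix}(u)+\operatorname{codim}\operatorname{fix}(u^{-1}w)=n+c(w)-2|\Pi_u(w)|+\#\{\text{parts of }\Pi_u(w)\text{ of nonzero weight}\}$; and (2) every part of $\Pi_u(w)$ either consists of a single cycle of $w$, or consists of exactly two cycles of $w$ of nonzero weights that sum to $0$ in $\mathbb Z/m\mathbb Z$.
   Context: Let $m,p,n$ be positive integers with $p\mid m$ and $\zeta=e^{2\pi i/m}$. The group $G(m,1,n)$ consists of pairs $w=[u;a]$ with $u\in\mathfrak S_n$ (the underlying permutation) and $a=(a_1,\dots,a_n)\in(\mathbb Z/m\mathbb Z)^n$ (the weights); $[u;a]$ is identified with the $n\times n$ monomial matrix having entry $\zeta^{a_i}$ in position $(u(i),i)$ and zeros elsewhere, the group law is matrix multiplication, and the group acts on $\mathbb C^n$. A cycle of $w$ is a cycle of $u$ (fixed points count as cycles of size $1$); $c(w)$ is the number of cycles of $w$, where the weight of a set $I\subseteq[n]$ (e.g. the underlying set of a cycle) is $\sum_{i\in I}a_i\in\mathbb Z/m\mathbb Z$, and $\mathrm{wt}(w)=\sum_{i=1}^n a_i$. $G(m,p,n)=\{w\in G(m,1,n):\mathrm{wt}(w)\equiv 0\pmod p\}$. $\operatorname{codim}\operatorname{fix}(g)=n-\dim\ker(g-1)$ for the action on $\mathbb C^n$; $x\le_{\mathrm{cdf}} y$ iff $\operatorname{codim}\operatorname{fix}(x)+\operatorname{codim}\operatorname{fix}(x^{-1}y)=\operatorname{codim}\operatorname{fix}(y)$,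 and $[\mathrm{id},w]_{\mathrm{cdf}}=\{u:u\le_{\mathrm{cdf}}w\}$. For $u,w\in G(m,p,n)$, $\Pi_u(w)$ is the set partition of the cycles of $w$ generated by the relation: cycles $C_1,C_2$ of $w$ are related if some cycle of $u$ intersects both (as subsets of $[n]$), closed under transitivity. The weight of a part is the sum of the weights of its cycles. *)

From HB Require Import structures.
From mathcomp Require Import all_boot all_order all_algebra all_fingroup all_field.
Set Implicit Arguments. Unset Strict Implicit. Unset Printing Implicit Defensive.
Import Order.TTheory GRing.Theory Num.Theory.
Local Open Scope ring_scope.

(* An element [u; a] of G(m,1,n): a permutation u of [n] = 'I_n and weights
   a : 'I_n -> Z/mZ, the latter represented by 'I_m (m > 0). *)
Definition elt (m n : nat) := ({perm 'I_n} * {ffun 'I_n -> 'I_m})%type.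

Section Defs.
Variables (m n : nat).

Definition wt_set (w : elt m n) (I : {set 'I_n}) : nat :=
  ((\sum_(i in I) (w.2 i : nat)) %% m)%N.

Definition wt (w : elt m n) : nat := wt_set w [set: 'I_n].

Definition in_Gmpn (p : nat) (w : elt m n) : bool := (wt w %% p == 0)%N.

Definition mat (z : algC) (w : elt m n) : 'M[algC]_n :=
  \matrix_(i, j) (if i == w.1 j then z ^+ (w.2 j : nat) else 0).

(* codim fix(g) = n - dim ker(g - 1), the kernel of g-1 acting on column
   vectors C^n, i.e. the row kernel of (g - 1)^T *)
Definition codim_fix (g : 'M[algC]_n) : nat :=
  (n - \rank (kermx (g - 1%:M)^T))%N.

Definition cdf_le (x y : 'M[algC]_n) : bool :=
  (codim_fix x + codim_fix (invmx x *m y) == codim_fix y)%N.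

Definition cycles (w : elt m n) : {set {set 'I_n}} := porbits w.1.

Definition ncycles (w : elt m n) : nat := #|cycles w|.

Definition Pi_rel (u w : elt m n) : rel {set 'I_n} :=
  fun C1 C2 => [&& C1 \in cycles w, C2 \in cycles w &
    [exists D in cycles u, (D :&: C1 != set0) && (D :&: C2 != set0)]].

Definition Pi (u w : elt m n) : {set {set {set 'I_n}}} :=
  equivalence_partition (connect (Pi_rel u w)) (cycles w).

Definition wt_part (w : elt m n) (P : {set {set 'I_n}}) : nat :=
  ((\sum_(C in P) wt_set w C) %% m)%N.

End Defs.

(* Write x := u^-1 w, so that w = u x.  The fixed space of a monomial matrix g
   has one dimension for each cycle of g of weight 0, so codim fix(g) = n - z(g),
   where z(g) counts these cycles and c(g) = z(g) + nz(g).  The genus inequality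
   for the permutation pair (u, x) gives c(u) + c(x) + c(w) <= n + 2k, where k is
   the number of orbits of <u, x>; each orbit is a union of parts of Pi_u(w), so
   k <= |Pi_u(w)|.  Weights add along w = u x, so a part of nonzero weight
   contains a cycle of nonzero weight of u or of x, and the number N of such
   parts is at most nz(u) + nz(x).  Together with the hypothesis
   codim fix(u) + codim fix(x) = codim fix(w) this yields
     sum_P f(P) <= 2 |Pi_u(w)|,  f(P) = #{cycles of weight 0 in P} + |P| + [wt P <> 0],
   whereas f(P) >= 2 for every part.  Hence f(P) = 2 for every part, which is
   (2), and the sum is an equality, which is (1). *)

From HB Require Import structures.
From mathcomp Require Import all_boot all_order all_algebra all_fingroup all_field.
From mathcomp Require Import zify.
Set Implicit Arguments. Unset Strict Implicit. Unset Printing Implicit Defensive.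
Import Order.TTheory GRing.Theory Num.Theory.

Section PorbitFacts.
Variable T : finType.
Implicit Types (s : {perm T}) (c x : T).

Lemma porbit_perm1 s x : porbit s (s x) = porbit s x.
Proof. by have := porbit_perm s 1 x; rewrite expg1. Qed.

Lemma mem_porbit1 s x : s x \in porbit s x.
Proof. by have := mem_porbit s 1 x; rewrite expg1. Qed.

Lemma porbits_porbit s C x : C \in porbits s -> x \in C -> C = porbit s x.
Proof. by case/imsetP=> y _ -> xy; apply/esym/eqP; rewrite eq_porbit_mem. Qed.

Lemma trivIset_porbits s : trivIset (porbits s).
Proof.
apply/trivIsetP => C D sC sD; apply: contraR => /pred0Pn[k /andP[kC kD]].
by rewrite (porbits_porbit sC kC) (porbits_porbit sD kD).
Qed.

Lemma iter_porbit_neq s c k : 0 < k < #|porbit s c| -> iter k s c != c.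
Proof.
case/andP=> k_gt0; have := uniq_traject_porbit s c.
case: #|porbit s c| => // L /= /andP[c_notin _] lt_k_L.
apply: contraNneq c_notin => E; apply/trajectP; exists k.-1; first lia.
by rewrite -iterSr prednK // E.
Qed.

Lemma big_porbit (R : Type) (idx : R) (op : Monoid.com_law idx) (F : T -> R) s c :
  \big[op/idx]_(i in porbit s c) F i = \big[op/idx]_(k < #|porbit s c|) F (iter k s c).
Proof.
transitivity (\big[op/idx]_(i in traject s c #|porbit s c|) F i).
  by apply: eq_bigl => i; rewrite porbit_traject.
rewrite -big_uniq ?uniq_traject_porbit //.
move: #|porbit s c| => L; elim: L c => [|L IHL] x; first by rewrite /= big_nil big_ord0.
by rewrite /= big_cons big_ord_recl IHL; under eq_bigr do rewrite -iterSr.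
Qed.
End PorbitFacts.

(** * Orbits of a pair of permutations *)

Section Components.
Variable T : finType.
Implicit Types (e : rel T) (a b i j : T).

Lemma card_imset_factor (X Y : finType) (f : T -> X) (g : T -> Y) :
  (forall i j, f i = f j -> g i = g j) -> #|g @: T| <= #|f @: T|.
Proof.
move=> fg; case: (pickP (fun _ : T => true)) => [i0 _ | T0]; last first.
  by rewrite (leq_trans (leq_imset_card _ _)) // (eq_card0 T0).
pose h y := g (odflt i0 [pick i | f i == y]).
suff -> : g @: T = h @: (f @: T) by apply: leq_imset_card.
rewrite -imset_comp; apply: eq_imset => i /=; rewrite /h.
by case: pickP => [i' /eqP/fg -> // | /(_ i)]; rewrite eqxx.
Qed.

Lemma card_imset_merge (X Y : finType) (f : T -> X) (g : T -> Y) a b :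
  (forall i j, f i = f j ->
     g i = g j \/ g i \in [set g a; g b] /\ g j \in [set g a; g b]) ->
  #|g @: T| <= (#|f @: T|).+1.
Proof.
move=> fg; pose g' i := if g i == g b then g a else g i.
have le_g'f : #|g' @: T| <= #|f @: T|.
  apply: card_imset_factor => i j /fg; rewrite /g' => -[-> // | []].
  by rewrite !inE => /orP[] /eqP-> /orP[] /eqP->; rewrite ?eqxx //; case: eqP.
apply: leq_trans (_ : #|g b |: (g' @: T)| <= _); last first.
  by rewrite cardsU1 addnC -addn1 leq_add ?leq_b1.
apply/subset_leq_card/subsetP => _ /imsetP[i _ ->]; rewrite !inE.
have [-> // | gib] := eqVneq (g i) (g b).
by apply/orP; right; apply/imsetP; exists i; rewrite // /g' (negbTE gib).
Qed.

Lemma n_comp_root e : connect_sym e -> n_comp e T = #|fingraph.root e @: T|.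
Proof.
move=> sym_e; apply: eq_card => x; rewrite !inE andbT.
apply/idP/imsetP => [/eqP rx | [y _ ->]]; last exact: roots_root.
by exists x.
Qed.

Lemma n_comp_sub e e' : connect_sym e -> connect_sym e' ->
  subrel e (connect e') -> n_comp e' T <= n_comp e T.
Proof.
move=> sym_e sym_e' ee'; rewrite !n_comp_root //.
apply: card_imset_factor => i j /(fingraph.rootP sym_e)/(connect_sub ee').
exact/(fingraph.rootP sym_e').
Qed.

Definition edge a b : rel T :=
  [rel i j | ((i == a) && (j == b)) || ((i == b) && (j == a))].

Lemma edge_sym a b : symmetric (edge a b).
Proof. by move=> i j; rewrite /edge /= orbC !(andbC (i == _)). Qed.

Section AddEdge.
Variables (e : rel T) (a b : T).
Hypothesis sym_e : connect_sym e.

Lemma connect_sym_add_edge : connect_sym (relU e (edge a b)).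
Proof. exact/relU_sym/sym_connect_sym/edge_sym. Qed.

Lemma connect_tperm i : connect (relU e (edge a b)) i (tperm a b i).
Proof.
by case: tpermP => [-> | -> | //]; apply: connect1; rewrite /= /edge /= !eqxx ?orbT.
Qed.

Lemma connect_add_edge i j : connect (relU e (edge a b)) i j ->
  [|| connect e i j, connect e i a | connect e i b].
Proof.
pose reach := [pred k | [|| connect e i k, connect e i a | connect e i b]].
have closed_reach : closed (relU e (edge a b)) reach.
  apply: (intro_closed connect_sym_add_edge) => x y /orP[exy | /orP[]/andP[/eqP-> _]];
    rewrite !inE => /or3P[eix | -> | ->]; rewrite ?orbT //.
  - by rewrite (connect_trans eix (connect1 exy)).
  - by rewrite eix orbT.
  - by rewrite eix !orbT.
by move/(closed_connect closed_reach); rewrite !inE connect0 => <-.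
Qed.

Lemma n_comp_add_edge : n_comp e T <= (n_comp (relU e (edge a b)) T).+1.
Proof.
rewrite (n_comp_root sym_e) (n_comp_root connect_sym_add_edge).
apply: (card_imset_merge (a := a) (b := b)) => i j.
move/(fingraph.rootP connect_sym_add_edge) => cij.
have [/(fingraph.rootP sym_e) -> | ncij] := boolP (connect e i j); first by left.
right; rewrite !inE !(fingraph.root_connect sym_e).
have cji : connect (relU e (edge a b)) j i by rewrite connect_sym_add_edge.
have := connect_add_edge cij; have := connect_add_edge cji.
by rewrite sym_e (negbTE ncij) => /= cj ci.
Qed.
End AddEdge.

Section PermPair.
Implicit Types (s t : {perm T}).

(* Its connected components are the orbits of the group generated by [s] and [t]. *)
Definition perm_rel s t : rel T :=
  fun i j => [|| j == s i, i == s j, j == t i | i == t j].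

Lemma perm_rel_sym s t : symmetric (perm_rel s t).
Proof.
by move=> i j; rewrite /perm_rel; apply/idP/idP => /or4P[] /eqP->; rewrite eqxx ?orbT.
Qed.

Lemma connect_perm_rel_sym s t : connect_sym (perm_rel s t).
Proof. exact/sym_connect_sym/perm_rel_sym. Qed.

Lemma connect_porbit s t i j : j \in porbit s i -> connect (perm_rel s t) i j.
Proof.
case/porbitP => k ->; rewrite permX; elim: k => //= k IHk.
by apply: connect_trans IHk (connect1 _); rewrite /perm_rel eqxx.
Qed.

Lemma connect_porbit_mul s t i j : j \in porbit (t * s) i -> connect (perm_rel s t) i j.
Proof.
case/porbitP => k ->; rewrite permX; elim: k => //= k IHk.
apply: connect_trans IHk _; rewrite permM.
set x := iter k _ i.
have ext : perm_rel s t x (t x) by rewrite /perm_rel eqxx !orbT.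
by apply: connect_trans (connect1 ext) (connect1 _); rewrite /perm_rel eqxx.
Qed.

Lemma porbits_le_n_comp1 s : #|porbits s| <= n_comp (perm_rel s 1) T.
Proof.
have sym1 := connect_perm_rel_sym s 1.
have porbit_closed i : closed (perm_rel s 1) (porbit s i).
  apply: (intro_closed sym1) => x y; rewrite /perm_rel.
  by case/or4P=> /eqP->; rewrite -!eq_porbit_mem ?perm1 ?porbit_perm1.
rewrite n_comp_root //; apply: card_imset_factor => i j /(fingraph.rootP sym1).
by move/(closed_connect (porbit_closed i)); rewrite porbit_id -eq_porbit_mem => /esym/eqP.
Qed.

Lemma perm_rel_tperm_mul s t a b :
  subrel (perm_rel s (tperm a b * t)) (connect (relU (perm_rel s t) (edge a b))).
Proof.
have t_step i : connect (relU (perm_rel s t) (edge a b)) i ((tperm a b * t)%g i).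
  rewrite permM; apply: connect_trans (connect_tperm _ _ _ i) (connect1 _).
  by rewrite /= /perm_rel eqxx !orbT.
move=> i j; rewrite {1}/perm_rel => /or4P[] /eqP->.
- by apply: connect1; rewrite /= /perm_rel eqxx.
- by apply: connect1; rewrite /= /perm_rel eqxx orbT.
- exact: t_step.
- by rewrite (connect_sym_add_edge _ _ (connect_perm_rel_sym s t)).
Qed.

Lemma n_comp_tperm_mul s t a b :
  n_comp (perm_rel s t) T <= (n_comp (perm_rel s (tperm a b * t)) T).+1.
Proof.
apply: leq_trans (n_comp_add_edge a b (connect_perm_rel_sym s t)) _; rewrite ltnS.
apply: n_comp_sub; [exact: connect_perm_rel_sym | | exact: perm_rel_tperm_mul].
exact: connect_sym_add_edge (connect_perm_rel_sym s t).
Qed.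

Lemma n_comp_tperm_mul_connect s t a b : connect (perm_rel s t) a b ->
  n_comp (perm_rel s t) T <= n_comp (perm_rel s (tperm a b * t)) T.
Proof.
move=> cab; apply: n_comp_sub; [exact: connect_perm_rel_sym.. | move=> i j].
move/perm_rel_tperm_mul; apply: connect_sub => x y /orP[/connect1 // |].
by case/orP=> /andP[/eqP-> /eqP->]; rewrite // connect_perm_rel_sym.
Qed.

Lemma porbits_genus_tperm_mul s t a b : a \in porbit t b -> a != b ->
  let t' := (tperm a b * t)%g in
  #|porbits s| + #|porbits t'| + #|porbits (t' * s)|
    <= #|T| + 2 * n_comp (perm_rel s t') T ->
  #|porbits s| + #|porbits t| + #|porbits (t * s)|
    <= #|T| + 2 * n_comp (perm_rel s t) T.
Proof.
move=> a_b ab t'; have tt' : t = (tperm a b * t')%g by rewrite mulgA tperm2 mul1g.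
have := porbits_mul_tperm t a b; rewrite /= a_b ab addn0 -/t'.
have := porbits_mul_tperm (t' * s) a b; rewrite /= mulgA -tt' ab /=.
have := n_comp_tperm_mul s t' a b; have := @n_comp_tperm_mul_connect s t' a b.
(* The [set]s identify cardinals elaborated through different canonical
   instances, which [lia] would otherwise treat as unrelated atoms. *)
rewrite -tt'; set X := #|porbits (t * s)|; set Y := #|porbits (t' * s)|.
set K := n_comp (perm_rel s t) T; set K' := n_comp (perm_rel s t') T.
have [_ /(_ isT) | ncab _] := boolP (connect (perm_rel s t') a b); first lia.
suff -> : a \notin porbit (t' * s) b by lia.
by apply: contra ncab => /connect_porbit_mul; rewrite connect_perm_rel_sym.
Qed.

Lemma porbits_genus s t :
  #|porbits s| + #|porbits t| + #|porbits (t * s)|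
    <= #|T| + 2 * n_comp (perm_rel s t) T.
Proof.
have [k] := ubnP (#|T| - #|porbits t|); elim: k t => // k IHk t lt_k.
case: (pickP (fun a => t a != a)) => [a ta | fix_t]; last first.
  have -> : t = 1%g by apply/permP => i; rewrite perm1; apply/eqP/negbFE/fix_t.
  have := porbits_le_n_comp1 s.
  have : #|porbits (1 : {perm T})| <= #|T| by exact: leq_imset_card.
  by rewrite mul1g; lia.
have a_ta : a \in porbit t (t a) by rewrite porbit_sym mem_porbit1.
apply: (porbits_genus_tperm_mul a_ta); first by rewrite eq_sym.
apply: IHk; have := porbits_mul_tperm t a (t a); rewrite /= a_ta eq_sym ta /= addn0.
have : #|porbits (tperm a (t a) * t)| <= #|T| by exact: leq_imset_card.
move: lt_k; set C := #|porbits t|; set C' := #|porbits (tperm a (t a) * t)|.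
by set N := #|T|; lia.
Qed.
End PermPair.
End Components.

(** * Fixed spaces of monomial matrices *)

Section FixedSpace.
Variables (m n : nat) (z : algC) (g : elt m n).
Local Open Scope ring_scope.
Hypothesis hz : m.-primitive_root z.
Implicit Types (v : 'rV[algC]_n) (c i : 'I_n).

Lemma mat_fixedP v :
  reflect (forall i, v 0 (g.1 i) = z ^+ g.2 i * v 0 i) (v *m (mat z g - 1%:M)^T == 0).
Proof.
have mulT i : (v *m (mat z g)^T) 0 (g.1 i) = z ^+ g.2 i * v 0 i.
  rewrite !mxE (bigD1 i) //= big1 => [|k ki]; first by rewrite !mxE eqxx addr0 mulrC.
  by rewrite !mxE (inj_eq perm_inj) eq_sym (negbTE ki) mulr0.
rewrite linearB /= trmx1 mulmxBr mulmx1 subr_eq0.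
apply: (iffP eqP) => [fix_v i | fix_v]; first by rewrite -{1}fix_v mulT.
by apply/rowP => j; rewrite -(permKV g.1 j) mulT fix_v.
Qed.

Definition cycle_prod c k := z ^+ (\sum_(j < k) g.2 (iter j g.1 c))%N.

Lemma cycle_prod0 c : cycle_prod c 0 = 1.
Proof. by rewrite /cycle_prod big_ord0. Qed.

Lemma cycle_prodS c k : cycle_prod c k.+1 = cycle_prod c k * z ^+ g.2 (iter k g.1 c).
Proof. by rewrite /cycle_prod big_ord_recr exprD. Qed.

Lemma cycle_prod_porbit c :
  (cycle_prod c #|porbit g.1 c| == 1) = (wt_set g (porbit g.1 c) == 0%N).
Proof.
by rewrite /cycle_prod -(big_porbit _ (fun i => nat_of_ord (g.2 i))) -(prim_order_dvd hz).
Qed.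

Section Fixed.
Variable v : 'rV[algC]_n.
Hypothesis fix_v : forall i, v 0 (g.1 i) = z ^+ g.2 i * v 0 i.

Lemma fixed_iter c k : v 0 (iter k g.1 c) = cycle_prod c k * v 0 c.
Proof.
elim: k => [|k IHk]; first by rewrite cycle_prod0 mul1r.
by rewrite iterS fix_v IHk cycle_prodS mulrCA mulrA.
Qed.

Lemma fixed_nonzero_cycle c : wt_set g (porbit g.1 c) != 0%N -> v 0 c = 0.
Proof.
rewrite -cycle_prod_porbit => /negbTE nz.
have := fixed_iter c #|porbit g.1 c|; rewrite iter_porbit => /eqP.
by rewrite -subr_eq0 -{1}[v 0 c]mul1r -mulrBl mulf_eq0 subr_eq0 eq_sym nz => /eqP.
Qed.
End Fixed.

Definition cycle_vec c : 'rV[algC]_n :=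
  \row_i \sum_(k < #|porbit g.1 c|) (if i == iter k g.1 c then cycle_prod c k else 0).

Lemma cycle_vec_out c i : i \notin porbit g.1 c -> cycle_vec c 0 i = 0.
Proof.
move=> i_notin; rewrite mxE big1 // => k _; case: eqP => // i_k.
by case/negP: i_notin; rewrite i_k -permX mem_porbit.
Qed.

Lemma cycle_vec_id c : cycle_vec c 0 c = 1.
Proof.
rewrite mxE; have := iter_porbit_neq (s := g.1) (c := c).
case: #|porbit g.1 c| (card_porbit_neq0 g.1 c) => // L _ neq_c.
rewrite big_ord_recl /= eqxx cycle_prod0 big1 ?addr0 // => k _.
by rewrite add0n -iterS eq_sym (negbTE (neq_c k.+1 (ltn_ord k))).
Qed.

Lemma cycle_vec_fixed c : wt_set g (porbit g.1 c) == 0%N ->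
  forall i, cycle_vec c 0 (g.1 i) = z ^+ g.2 i * cycle_vec c 0 i.
Proof.
rewrite -cycle_prod_porbit => /eqP prod_L i; rewrite !mxE.
move: prod_L (iter_porbit g.1 c).
case: #|porbit g.1 c| => [|L] prod_L iter_L; first by rewrite !big_ord0 mulr0.
rewrite big_ord_recl big_ord_recr /= mulrDr big_distrr /= addrC; congr (_ + _).
  apply: eq_bigr => k _; rewrite /bump /= (inj_eq perm_inj).
  by case: eqP => [-> | _]; rewrite ?mulr0 // cycle_prodS mulrC.
rewrite -{1}iter_L /= (inj_eq perm_inj).
by case: eqP => [-> | _]; rewrite ?mulr0 // cycle_prod0 -prod_L cycle_prodS mulrC.
Qed.
End FixedSpace.

Definition zero_cycles m n (g : elt m n) := [set C in cycles g | wt_set g C == 0%N].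
Definition nonzero_cycles m n (g : elt m n) := [set C in cycles g | wt_set g C != 0%N].

Section FixedBasis.
Variables (m n : nat) (z : algC) (g : elt m n).
(* Only a default for [pick] on cycles, which are nonempty. *)
Variable i0 : 'I_n.
Local Open Scope ring_scope.
Hypothesis hz : m.-primitive_root z.
Local Notation M := (mat z g - 1%:M)^T.

Definition cycle_base (C : {set 'I_n}) := odflt i0 [pick i in C].

Lemma porbit_cycle_base C : C \in cycles g -> porbit g.1 (cycle_base C) = C.
Proof.
case/imsetP=> x _ ->; apply/eqP; rewrite eq_porbit_mem /cycle_base.
by case: pickP => [// | /(_ x)]; rewrite porbit_id.
Qed.

Definition evalmx : 'M[algC]_(n, #|zero_cycles g|) :=
  \matrix_(i, j) (i == cycle_base (enum_val j))%:R.

Definition fixed_basis : 'M[algC]_(#|zero_cycles g|, n) :=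
  \matrix_(j, i) cycle_vec z g (cycle_base (enum_val j)) 0 i.

Lemma mul_evalmx (v : 'rV_n) j : (v *m evalmx) 0 j = v 0 (cycle_base (enum_val j)).
Proof.
rewrite !mxE (bigD1 (cycle_base (enum_val j))) //= !mxE eqxx mulr1 big1 ?addr0 // => i ni.
by rewrite !mxE (negbTE ni) mulr0.
Qed.

Lemma zero_cycles_sub C : C \in zero_cycles g -> C \in cycles g.
Proof. by rewrite inE => /andP[]. Qed.

Lemma row_fixed_basis j : row j fixed_basis = cycle_vec z g (cycle_base (enum_val j)).
Proof. by apply/rowP => i; rewrite !mxE. Qed.

Lemma fixed_basis_evalmx : fixed_basis *m evalmx = 1%:M.
Proof.
apply/matrixP => j j'.
transitivity ((row j fixed_basis *m evalmx) 0 j'); first by rewrite -row_mul [RHS]mxE.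
rewrite row_fixed_basis mul_evalmx [RHS]mxE.
have Cj := zero_cycles_sub (enum_valP j).
have [<- | jj'] := eqVneq j j'; first by rewrite cycle_vec_id.
rewrite cycle_vec_out // porbit_cycle_base //; apply: contra jj' => in_j.
have Cj' := zero_cycles_sub (enum_valP j').
apply/eqP/enum_val_inj; rewrite -(porbit_cycle_base Cj) -(porbit_cycle_base Cj').
by apply/eqP; rewrite eq_porbit_mem porbit_sym (porbit_cycle_base Cj).
Qed.

Lemma fixed_basis_fixed : fixed_basis *m M = 0.
Proof.
apply/row_matrixP => j; rewrite row_mul row0 row_fixed_basis; apply/eqP/mat_fixedP.
by have /setIdP[Cj wt0] := enum_valP j; apply: cycle_vec_fixed; rewrite ?porbit_cycle_base.
Qed.

Lemma fixed_eq0 p (X : 'M[algC]_(p, n)) : X *m M = 0 -> X *m evalmx = 0 -> X = 0.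
Proof.
move=> XM Xe; apply/row_matrixP => r; rewrite row0; apply/rowP => i; rewrite [RHS]mxE.
have /mat_fixedP fix_r : row r X *m M == 0 by rewrite -row_mul XM row0.
have [wt0 | nz] := eqVneq (wt_set g (porbit g.1 i)) 0%N; last first.
  exact: (fixed_nonzero_cycle hz fix_r).
have ZC : porbit g.1 i \in zero_cycles g by rewrite inE wt0 andbT; apply: imset_f.
have /porbitP[k ->] : i \in porbit g.1 (cycle_base (porbit g.1 i)).
  by rewrite porbit_cycle_base ?porbit_id // zero_cycles_sub.
rewrite permX (fixed_iter fix_r).
have := mul_evalmx (row r X) (enum_rank_in ZC (porbit g.1 i)).
by rewrite enum_rankK_in // -row_mul Xe row0 mxE => <-; rewrite mulr0.
Qed.

Lemma kermx_fixed_basis : (kermx M == fixed_basis)%MS.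
Proof.
apply/andP; split; last by rewrite sub_kermx fixed_basis_fixed.
set K := kermx M; set D := K - K *m evalmx *m fixed_basis.
suff /eqP : D = 0 by rewrite subr_eq0 => /eqP->; apply: submxMl.
apply: fixed_eq0.
  by rewrite mulmxBl -(mulmxA (K *m evalmx)) fixed_basis_fixed mulmx0 mulmx_ker subr0.
by rewrite mulmxBl -!mulmxA fixed_basis_evalmx mulmx1 subrr.
Qed.

Lemma rank_kermx_mat : \rank (kermx M) = #|zero_cycles g|.
Proof.
rewrite (eqmx_rank kermx_fixed_basis); apply/eqP.
by apply/row_freeP; exists evalmx; apply: fixed_basis_evalmx.
Qed.
End FixedBasis.

Lemma codim_fix_mat m n z (g : elt m n) :
  (m.-primitive_root z)%R -> codim_fix (mat z g) = n - #|zero_cycles g|.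
Proof.
move=> hz; rewrite /codim_fix.
by case: n g => [|n] g; rewrite ?sub0n // (rank_kermx_mat g ord0).
Qed.

Section Quotient.
Variables (m n : nat) (z : algC).
Hypothesis hm : 0 < m.
Hypothesis hz : (m.-primitive_root z)%R.
Implicit Types u w : elt m n.

Definition ldiv u w : elt m n :=
  ((w.1 * u.1^-1)%g,
   [ffun j => Ordinal (ltn_pmod (w.2 j + (m - u.2 ((u.1^-1)%g (w.1 j)))) hm)]).

Lemma ldiv_perm u w : ((ldiv u w).1 * u.1)%g = w.1.
Proof. by rewrite -mulgA mulVg mulg1. Qed.

Lemma ldiv_weight u w j : w.2 j = (u.2 ((ldiv u w).1 j) + (ldiv u w).2 j) %% m :> nat.
Proof.
rewrite permM ffunE /= modnDmr addnCA subnKC; last exact/ltnW/ltn_ord.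
by rewrite modnDr modn_small.
Qed.

Lemma mul_mat_ldiv u w : (mat z u *m mat z (ldiv u w) = mat z w)%R.
Proof.
apply/matrixP => i j; rewrite !mxE (bigD1 ((ldiv u w).1 j)) //= !mxE eqxx.
rewrite big1 => [|k kj]; last by rewrite !mxE (negbTE kj) mulr0.
rewrite addr0 -permM ldiv_perm (ldiv_weight u w j) (prim_expr_mod hz) exprD.
by case: eqP => _; rewrite ?mul0r.
Qed.

Lemma mat_unit u : mat z u \in unitmx.
Proof.
pose one : elt m n := (1%g, [ffun=> Ordinal hm]).
have mat_one : mat z one = 1%:M%R.
  by apply/matrixP => i j; rewrite !mxE perm1 ffunE expr0; case: eqP.
by case: (mulmx1_unit (etrans (mul_mat_ldiv u one) mat_one)).
Qed.

Lemma invmx_mat_mul u w : (invmx (mat z u) *m mat z w = mat z (ldiv u w))%R.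
Proof. by rewrite -(mul_mat_ldiv u w) mulKmx ?mat_unit. Qed.
End Quotient.

Section Weights.
Variables (m n : nat) (g : elt m n).

Lemma card_zero_nonzero_cycles : #|zero_cycles g| + #|nonzero_cycles g| = #|cycles g|.
Proof.
rewrite -(cardsID [set C | wt_set g C == 0%N] (cycles g)).
by congr (_ + _); apply: eq_card => C; rewrite !inE andbC.
Qed.

Lemma wt_set_cycles_eq0 (S : {set 'I_n}) :
  (forall i, (g.1 i \in S) = (i \in S)) ->
  (forall i, i \in S -> wt_set g (porbit g.1 i) = 0%N) -> wt_set g S = 0%N.
Proof.
move=> g_S wt0; pose Q := [set porbit g.1 i | i in S].
have cover_Q : cover Q = S.
  apply/setP => j; apply/bigcupP/idP => [[_ /imsetP[i iS ->]] | jS]; last first.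
    by exists (porbit g.1 j); [apply: imset_f | apply: porbit_id].
  case/porbitP => k ->; rewrite permX; elim: k => //= k IHk.
  by rewrite g_S.
have triv_Q : trivIset Q.
  apply: trivIsetS (trivIset_porbits g.1); apply/subsetP => _ /imsetP[i _ ->].
  exact: imset_f.
rewrite /wt_set -cover_Q big_trivIset //= -modn_summ big1 ?mod0n // => _ /imsetP[i iS ->].
exact: wt0.
Qed.
End Weights.

Lemma card_cycles_le m n (g : elt m n) : #|cycles g| <= n.
Proof. by apply: leq_trans (leq_imset_card _ _) _; rewrite card_ord. Qed.

Lemma card_zero_cycles_le m n (g : elt m n) : #|zero_cycles g| <= n.
Proof.
by apply: leq_trans (card_cycles_le g); rewrite -(card_zero_nonzero_cycles g) leq_addr.
Qed.

(** * The partition Pi_u(w) *)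

Section Partition.
Variables (m n : nat) (u w : elt m n).
Local Notation Pi := (Pi u w).

Lemma Pi_rel_sym : symmetric (Pi_rel u w).
Proof.
move=> C1 C2; rewrite /Pi_rel andbCA; congr [&& _, _ & _].
by apply/existsP/existsP => -[D /and3P[uD D1 D2]]; exists D; rewrite uD D1 D2.
Qed.

Lemma Pi_rel_equiv : {in cycles w & &, equivalence_rel (connect (Pi_rel u w))}.
Proof.
move=> C1 C2 C3 _ _ _; split=> // C12.
by apply/idP/idP; apply: connect_trans; rewrite // (sym_connect_sym Pi_rel_sym).
Qed.

Lemma Pi_partition : partition Pi (cycles w).
Proof. exact/equivalence_partitionP/Pi_rel_equiv. Qed.

Lemma cover_Pi : cover Pi = cycles w.
Proof. by case/and3P: Pi_partition => /eqP. Qed.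

Lemma trivIset_Pi : trivIset Pi.
Proof. by case/and3P: Pi_partition. Qed.

Lemma Pi_neq0 P : P \in Pi -> P != set0.
Proof. by move=> PPi; case/and3P: Pi_partition => _ _; apply: contraNneq => <-. Qed.

Lemma porbit_cycles i : porbit w.1 i \in cycles w.
Proof. exact: imset_f. Qed.

Definition part i := pblock Pi (porbit w.1 i).

Lemma part_Pi i : part i \in Pi.
Proof. by rewrite pblock_mem // cover_Pi porbit_cycles. Qed.

Lemma eq_part i j :
  (part i == part j) = connect (Pi_rel u w) (porbit w.1 i) (porbit w.1 j).
Proof.
rewrite /part eq_pblock ?trivIset_Pi ?cover_Pi ?porbit_cycles //.
by rewrite pblock_equivalence_partition ?porbit_cycles //; apply: Pi_rel_equiv.
Qed.

Lemma part_w i : part (w.1 i) = part i.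
Proof. by rewrite /part porbit_perm1. Qed.

Lemma part_u i : part (u.1 i) = part i.
Proof.
apply/eqP; rewrite eq_part (sym_connect_sym Pi_rel_sym); apply: connect1.
rewrite /Pi_rel !porbit_cycles; apply/existsP; exists (porbit u.1 i).
rewrite imset_f //=; apply/andP; split; apply/set0Pn.
  by exists i; rewrite inE !porbit_id.
by exists (u.1 i); rewrite inE porbit_id mem_porbit1.
Qed.

Lemma part_porbit (s : {perm 'I_n}) : (forall i, part (s i) = part i) ->
  forall i j, j \in porbit s i -> part j = part i.
Proof. by move=> s_part i j /porbitP[k ->]; rewrite permX; elim: k => //= k <-. Qed.

Lemma Pi_imset_part : Pi = [set part i | i : 'I_n].
Proof.
apply/setP => P; apply/idP/imsetP => [PPi | [i _ ->]]; last exact: part_Pi.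
have /set0Pn[C CP] := Pi_neq0 PPi.
have : C \in cover Pi by apply/bigcupP; exists P.
rewrite cover_Pi => /imsetP[i _ defC]; exists i => //.
by rewrite /part -defC (def_pblock trivIset_Pi PPi CP).
Qed.

Lemma mem_cover_part P : P \in Pi -> forall i, (i \in cover P) = (part i == P).
Proof.
move=> PPi i; apply/bigcupP/eqP => [[C CP iC] | <-]; last first.
  by exists (porbit w.1 i); rewrite ?porbit_id // mem_pblock cover_Pi porbit_cycles.
have : C \in cover Pi by apply/bigcupP; exists P.
rewrite cover_Pi => wC; rewrite /part -(porbits_porbit wC iC).
exact: def_pblock trivIset_Pi PPi CP.
Qed.

Lemma n_comp_le_card_Pi (t : {perm 'I_n}) :
  (t * u.1)%g = w.1 -> n_comp (perm_rel u.1 t) 'I_n <= #|Pi|.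
Proof.
move=> tu; have sym_ut := connect_perm_rel_sym u.1 t.
have reach_w i k : k \in porbit w.1 i -> connect (perm_rel u.1 t) i k.
  by rewrite -tu; apply: connect_porbit_mul.
rewrite n_comp_root // Pi_imset_part.
apply: card_imset_factor => i j /eqP; rewrite eq_part => Cij; apply/(fingraph.rootP sym_ut).
pose reach := [pred C : {set 'I_n} | [forall k in C, connect (perm_rel u.1 t) i k]].
have reach_closed : closed (Pi_rel u w) reach.
  apply: (intro_closed (sym_connect_sym Pi_rel_sym)) => C C'.
  case/and3P=> _ wC' /existsP[D /and3P[uD /set0Pn[y] /setIP[yD yC]]].
  case/set0Pn=> y' /setIP[y'D y'C'] /forallP reachC; apply/forallP => k; apply/implyP => kC'.
  apply: connect_trans (implyP (reachC y) yC) (connect_trans _ (reach_w y' k _)).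
    by apply: connect_porbit; rewrite -(porbits_porbit uD yD).
  by rewrite -(porbits_porbit wC' y'C').
have := closed_connect reach_closed Cij; rewrite !inE.
have -> : [forall (k | k \in porbit w.1 i), connect (perm_rel u.1 t) i k].
  by apply/forallP => k; apply/implyP; apply: reach_w.
by move/esym/forallP/(_ j); rewrite porbit_id.
Qed.
End Partition.

Section PartWeights.
Variables (m n : nat) (u w : elt m n).
Hypothesis hm : 0 < m.
Local Notation x := (ldiv hm u w).
Local Notation part := (part u w).

Lemma part_ldiv i : part (x.1 i) = part i.
Proof. by rewrite -part_u -permM ldiv_perm part_w. Qed.

Lemma wt_part_cover P : P \in Pi u w -> wt_part w P = wt_set w (cover P).
Proof.
move=> PPi; rewrite /wt_part /wt_set modn_summ big_trivIset //.
apply: trivIsetS (trivIset_porbits w.1); apply/subsetP => C CP.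
by rewrite -[porbits _](cover_Pi u w); apply/bigcupP; exists P.
Qed.

Lemma wt_set_ldiv (S : {set 'I_n}) : (forall i, (x.1 i \in S) = (i \in S)) ->
  wt_set w S = (wt_set u S + wt_set x S) %% m.
Proof.
move=> xS; rewrite /wt_set modnDm (eq_bigr _ (fun i _ => ldiv_weight hm u w i)).
rewrite modn_summ big_split /=; congr ((_ + _) %% m).
by rewrite [RHS](reindex_inj (@perm_inj _ x.1)); apply: eq_bigl => i; rewrite xS.
Qed.

Lemma part_nonzero_cycle (g : elt m n) P : (forall i, part (g.1 i) = part i) ->
  P \in Pi u w -> wt_set g (cover P) != 0%N ->
  exists2 D, D \in nonzero_cycles g & [set part i | i in D] = [set P].
Proof.
move=> g_part PPi nzP; have g_cover i : (g.1 i \in cover P) = (i \in cover P).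
  by rewrite !(mem_cover_part PPi) g_part.
have [i /andP[iP nz_i]] : exists i, (i \in cover P) && (wt_set g (porbit g.1 i) != 0%N).
  apply/existsP; apply: contraR nzP => /existsPn all0.
  apply/eqP/wt_set_cycles_eq0 => // j jP.
  by move: (all0 j); rewrite jP negbK => /eqP.
exists (porbit g.1 i); first by rewrite inE nz_i andbT; apply: imset_f.
apply/setP => Q; rewrite inE; apply/imsetP/eqP => [[j ij ->] | ->].
  by rewrite (part_porbit g_part ij); apply/eqP; rewrite -(mem_cover_part PPi).
by exists i; rewrite ?porbit_id //; apply/esym/eqP; rewrite -(mem_cover_part PPi).
Qed.

Lemma card_nonzero_parts :
  #|[set P in Pi u w | wt_part w P != 0%N]| <= #|nonzero_cycles u| + #|nonzero_cycles x|.
Proof.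
set NP := [set P in _ | _]; pose parts (D : {set 'I_n}) := [set part i | i in D].
have sub_parts :
    [set [set P] | P in NP] \subset parts @: (nonzero_cycles u :|: nonzero_cycles x).
  apply/subsetP => _ /imsetP[P /setIdP[PPi nzP] ->].
  have x_cover i : (x.1 i \in cover P) = (i \in cover P).
    by rewrite !(mem_cover_part PPi) part_ldiv.
  move: nzP; rewrite wt_part_cover // wt_set_ldiv //.
  have [nz_u _ | /negbNE/eqP->] := boolP (wt_set u (cover P) != 0%N).
    have [D uD <-] := part_nonzero_cycle (@part_u _ _ u w) PPi nz_u.
    by apply: imset_f; rewrite inE uD.
  have [nz_x _ | /negbNE/eqP-> /[!mod0n] //] := boolP (wt_set x (cover P) != 0%N).
  have [D xD <-] := part_nonzero_cycle part_ldiv PPi nz_x.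
  by apply: imset_f; rewrite inE xD orbT.
have := subset_leq_card sub_parts; rewrite card_imset; last exact: set1_inj.
move/leq_trans; apply; apply: leq_trans (leq_imset_card _ _) _.
by rewrite cardsU leq_subr.
Qed.
End PartWeights.

Lemma sum_ge_const_eq (I : finType) (A : {pred I}) (F : I -> nat) c :
  (forall i, i \in A -> c <= F i) -> \sum_(i in A) F i <= #|A| * c ->
  forall i, i \in A -> F i = c.
Proof.
move=> geF le_sum.
have split_sum : \sum_(i in A) F i = \sum_(i in A) (F i - c) + #|A| * c.
  by rewrite -sum_nat_const -big_split; apply: eq_bigr => i /geF/subnK.
have /eqP : \sum_(i in A) (F i - c) = 0 by move: le_sum; rewrite split_sum; lia.
rewrite sum_nat_eq0 => /forall_inP sub0 i Ai; apply/eqP; rewrite eqn_leq geF //.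
by rewrite -subn_eq0 sub0.
Qed.

Lemma sum_nat_bool (I : finType) (A : {pred I}) (b : pred I) :
  \sum_(i in A) b i = #|[set i in A | b i]|.
Proof. by rewrite -sum1dep_card big_mkcondr; apply: eq_bigr => i _; case: (b i). Qed.

Section Scores.
Variables (m n : nat) (u w : elt m n).

Definition part_score (P : {set {set 'I_n}}) :=
  #|[set C in P | wt_set w C == 0%N]| + #|P| + (wt_part w P != 0%N).

Lemma sum_part_score : \sum_(P in Pi u w) part_score P =
  #|zero_cycles w| + ncycles w + #|[set P in Pi u w | wt_part w P != 0%N]|.
Proof.
rewrite !big_split /= -(card_partition (Pi_partition u w)) sum_nat_bool.
congr (_ + _ + _).
under eq_bigr do rewrite -sum_nat_bool.
by rewrite -big_trivIset ?trivIset_Pi // cover_Pi sum_nat_bool.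
Qed.

Lemma part_score_ge2 (P : {set {set 'I_n}}) : P \in Pi u w -> 2 <= part_score P.
Proof.
move=> PPi; have := Pi_neq0 PPi; rewrite -card_gt0 /part_score.
have [/eqP/cards1P[C ->] _ | P_ne1 P_gt0] := eqVneq #|P| 1; last lia.
rewrite cards1 /wt_part big_set1 modn_mod.
have [wt0 | _] := eqVneq (wt_set w C) 0%N; last by rewrite /=; lia.
suff : 0 < #|[set C0 in [set C] | wt_set w C0 == 0%N]| by lia.
by rewrite card_gt0; apply/set0Pn; exists C; rewrite !inE eqxx wt0.
Qed.

Lemma part_score2 (P : {set {set 'I_n}}) : P \in Pi u w -> part_score P = 2 ->
  #|P| = 1 \/
  exists C1 C2, [/\ C1 != C2, P = [set C1; C2], wt_set w C1 != 0%N,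
                    wt_set w C2 != 0%N & (wt_set w C1 + wt_set w C2) %% m = 0%N].
Proof.
move=> PPi; have := Pi_neq0 PPi; rewrite -card_gt0 /part_score.
set k := #|P|; set k0 := #|[set C in P | _]|.
have [-> _ _ | /eqP P_ne1 P_gt0 score2] := eqVneq k 1; [by left | right].
have [P2 Z0 wt0] : [/\ k = 2, k0 = 0 & wt_part w P = 0%N].
  move: score2; have [wt0 | _] := eqVneq (wt_part w P) 0%N => /= score2; last lia.
  by split=> //; lia.
have [C1 [C2 [C12 defP]]] := cards2P _ (introT eqP P2).
have no_zero : [set C in P | wt_set w C == 0%N] = set0.
  by apply/eqP; rewrite -cards_eq0 -/k0 Z0.
have wt_nz C : C \in P -> wt_set w C != 0%N.
  by move=> CP; have := in_set0 C; rewrite -no_zero inE CP => /negbT.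
exists C1, C2; split=> //; rewrite ?wt_nz ?defP ?inE ?eqxx ?orbT //.
by move: wt0; rewrite defP /wt_part big_setU1 ?inE //= big_set1.
Qed.
End Scores.

Lemma score_sum_le m n z (u w : elt m n) (hm : 0 < m) : (m.-primitive_root z)%R ->
  cdf_le (mat z u) (mat z w) ->
  #|zero_cycles w| + ncycles w + #|[set P in Pi u w | wt_part w P != 0%N]|
    <= 2 * #|Pi u w|.
Proof.
move=> hz; rewrite /cdf_le (invmx_mat_mul hm hz) !(codim_fix_mat _ hz) => /eqP codim_eq.
have := porbits_genus u.1 (ldiv hm u w).1; rewrite ldiv_perm card_ord.
have := n_comp_le_card_Pi (ldiv_perm hm u w).
have := card_nonzero_parts u w hm.
have := card_zero_nonzero_cycles u; have := card_zero_nonzero_cycles (ldiv hm u w).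
have := card_zero_nonzero_cycles w; have := card_cycles_le w.
have := card_cycles_le u; have := card_cycles_le (ldiv hm u w).
move: codim_eq; rewrite /ncycles /cycles; set x := ldiv hm u w.
set Cu := #|porbits u.1|; set Cx := #|porbits x.1|; set Cw := #|porbits w.1|.
by set K := n_comp _ _; lia.
Qed.

Unset Implicit Arguments.
Theorem mainTheorem9 (m p n : nat) (z : algC)
  (hm : 0 < m) (hp : 0 < p) (hpm : p %| m) (hz : (m.-primitive_root z)%R)
  (w u : elt m n) (hw : in_Gmpn p w) (hu : in_Gmpn p u)
  (huw : cdf_le (mat z u) (mat z w)) :
  (((codim_fix (mat z u) + codim_fix (invmx (mat z u) *m mat z w))%N%:Z
     = n%:Z + (ncycles w)%:Z - 2 * (#|Pi u w|)%:Z
        + (#|[set P in Pi u w | wt_part w P != 0%N]|)%:Z)%R)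
  /\
  (forall P, P \in Pi u w ->
     #|P| = 1 \/
     (exists C1 C2, [/\ C1 != C2, P = [set C1; C2],
        wt_set w C1 != 0, wt_set w C2 != 0 &
        (wt_set w C1 + wt_set w C2) %% m = 0])).
Proof.
have score2 : forall P, P \in Pi u w -> part_score w P = 2.
  apply: sum_ge_const_eq => [P /part_score_ge2 // |].
  by rewrite sum_part_score mulnC; apply: score_sum_le huw.
split; last by move=> P PPi; apply: part_score2 PPi (score2 P PPi).
have := sum_part_score u w; rewrite (eq_bigr _ score2) sum_nat_const.
move: huw; rewrite /cdf_le => /eqP ->; rewrite (codim_fix_mat _ hz).
have := card_zero_cycles_le w; lia.
Qed.
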